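(* Let $A,B\in \mathbb{R}^{m\times n}$ with $m<n$ and $b\in \mathbb{R}^m$. If the equation $Ax-B|x|=b$ has a solution $x_*$ with sign pattern $s=\operatorname{sign}(x_* )\in\{-1,0,1\}^n$ such that $x_*$ has more than $\operatorname{rank}(A\operatorname{diag}(s) - B)$ nonzero entries, then $Ax-B|x|=b$ has infinitely many solutions with the sign pattern $s$.
   Context: $|x|$ is the entrywise absolute value; $\operatorname{diag}(s)$ is the diagonal matrix with diagonal $s$; $\operatorname{sign}$ is applied entrywise with $\operatorname{sign}(r)=1,0,-1$ for $r>0,r=0,r<0$. A vector $x$ has sign pattern $s$ if $\operatorname{sign}(x_{(i)})=s_{(i)}$ for all $i$. *)

From mathcomp Require Import all_boot all_order all_algebra.
From mathcomp Require Import classical_sets cardinality.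
Set Implicit Arguments. Unset Strict Implicit. Unset Printing Implicit Defensive.
Import Order.TTheory GRing.Theory Num.Theory.
Local Open Scope ring_scope.

Definition absv (R : realDomainType) (n : nat) (x : 'cV[R]_n) : 'cV[R]_n :=
  \col_i `|x i ord0|.

Definition signr (R : realDomainType) (r : R) : R :=
  if 0 < r then 1 else if r < 0 then -1 else 0.

Definition signv (R : realDomainType) (n : nat) (x : 'cV[R]_n) : 'cV[R]_n :=
  \col_i signr (x i ord0).

Definition diagv (R : realDomainType) (n : nat) (s : 'cV[R]_n) : 'M[R]_n :=
  diag_mx s^T.

Definition nnz (R : realDomainType) (n : nat) (x : 'cV[R]_n) : nat :=
  #|[set i : 'I_n | x i ord0 != 0]|.

Definition sol_sign (R : realDomainType) (m n : nat) (A B : 'M[R]_(m, n))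
  (b : 'cV[R]_m) (s : 'cV[R]_n) : set 'cV[R]_n :=
  [set x | A *m x - B *m absv x = b /\ signv x = s].

From mathcomp Require Import all_boot all_order all_algebra.
From mathcomp Require Import classical_sets cardinality.
Set Implicit Arguments. Unset Strict Implicit. Unset Printing Implicit Defensive.
Import Order.TTheory GRing.Theory Num.Theory.
Local Open Scope ring_scope.

(* Let s = sign x* and M = A diag(s) - B.  As rank M is smaller than the
   support of x*, M has a nonzero kernel vector u supported on that support.
   For small t > 0, y = x* + t diag(s) u has sign pattern s and
   |y| = |x*| + t u, hence A y - B |y| = b + t M u = b; and diag(s) u <> 0,
   so distinct t give distinct solutions. *)

Lemma signrE (R : realDomainType) (r : R) : signr r = Num.sg r.
Proof. by rewrite /signr; case: sgrP. Qed.

Lemma sgr_normr_addr_sgM (R : realDomainType) (x y : R) :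
  y = 0 \/ `|y| < `|x| ->
  Num.sg (x + Num.sg x * y) = Num.sg x /\ `|x + Num.sg x * y| = `|x| + y.
Proof.
case=> [-> | y_lt_x]; first by rewrite mulr0 !addr0.
have x_neq0 : x != 0 by rewrite -normr_gt0 (le_lt_trans _ y_lt_x).
have xy_gt0 : 0 < `|x| + y.
  by rewrite -ltrBlDr sub0r (le_lt_trans _ y_lt_x) // -normrN ler_norm.
have -> : x + Num.sg x * y = Num.sg x * (`|x| + y).
  by rewrite mulrDr -numEsg.
by rewrite sgrM normrM normr_sg x_neq0 mul1r (gtr0_sg xy_gt0) mulr1 sgr_id gtr0_norm.
Qed.

Definition dominated_by (R : realDomainType) n (x u : 'cV[R]_n) :=
  forall j, u j ord0 = 0 \/ `|u j ord0| < `|x j ord0|.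

Lemma diagv_mulmxE (R : realDomainType) n (s u : 'cV[R]_n) j :
  (diagv s *m u) j ord0 = s j ord0 * u j ord0.
Proof. by rewrite /diagv mul_diag_mx !mxE. Qed.

Lemma signv_absv_addr_diag (R : realDomainType) n (x u : 'cV[R]_n) :
  dominated_by x u ->
  signv (x + diagv (signv x) *m u) = signv x /\
  absv (x + diagv (signv x) *m u) = absv x + u.
Proof.
move=> small.
have yE j :
    (x + diagv (signv x) *m u) j ord0 = x j ord0 + Num.sg (x j ord0) * u j ord0.
  by rewrite mxE diagv_mulmxE mxE signrE.
have entry j := sgr_normr_addr_sgM (small j).
split; apply/matrixP => j k; rewrite (ord1 k) [LHS]mxE yE !mxE.
  by rewrite !signrE (entry j).1.
by rewrite (entry j).2.
Qed.

Lemma sol_sign_addr_diag (R : realDomainType) m n (A B : 'M[R]_(m, n)) b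
    (x u : 'cV[R]_n) :
  A *m x - B *m absv x = b -> (A *m diagv (signv x) - B) *m u = 0 ->
  dominated_by x u ->
  sol_sign A B b (signv x) (x + diagv (signv x) *m u).
Proof.
move=> xb /eqP; rewrite mulmxBl subr_eq0 -mulmxA => /eqP ker small.
have [sgn_eq abs_eq] := signv_absv_addr_diag small.
split=> //; rewrite abs_eq !mulmxDr ker -xb.
by rewrite opprD addrACA subrr addr0.
Qed.

Lemma supported_kernel_vector (R : fieldType) m n (M : 'M[R]_(m, n))
    (S : {set 'I_n}) :
  (\rank M < #|S|)%N ->
  exists2 u : 'cV[R]_n, M *m u = 0 & u != 0 /\ forall j, j \notin S -> u j ord0 = 0.
Proof.
move=> rkM.
pose E : 'M[R]_(n, #|S|) := colsub enum_val 1%:M.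
have EtE : E^T *m E = 1%:M.
  rewrite trmx_mxsub trmx1 -mxsub_mul mul1mx.
  by apply/matrixP => i j; rewrite !mxE (inj_eq enum_val_inj).
have : ~~ row_free (M *m E)^T.
  by rewrite /row_free mxrank_tr neq_ltn (leq_ltn_trans (mxrankM_maxl _ _)).
rewrite -kermx_eq0 => /rowV0Pn[v /sub_kermxP vK v_neq0].
exists (E *m v^T); last split.
- by apply: trmx_inj; rewrite mulmxA trmx_mul trmxK trmx0.
- apply: contra v_neq0 => /eqP Ev0.
  by rewrite -[v]trmxK -[v^T]mul1mx -EtE -mulmxA Ev0 mulmx0 trmx0.
- move=> j jS; rewrite !mxE big1 // => i _; rewrite !mxE.
  by case: eqP => [ji|]; [move: jS; rewrite ji enum_valP | rewrite mul0r].
Qed.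

Lemma exists_small_pos_factor (R : realFieldType) (I : finType) (P : pred I)
    (a b : I -> R) :
  (forall i, P i -> 0 < a i) -> exists2 e : R, 0 < e & forall i, P i -> e * b i < a i.
Proof.
move=> a_gt0.
pose c := 1 + \sum_(i | P i) `|b i| / a i.
have terms_ge0 i : P i -> 0 <= `|b i| / a i.
  by move=> Pi; rewrite divr_ge0 // ltW // a_gt0.
have c_gt0 : 0 < c by rewrite ltr_wpDr // sumr_ge0.
exists c^-1; first by rewrite invr_gt0.
move=> i Pi; have a_i_gt0 := a_gt0 i Pi.
rewrite -[a i](mulKf (lt0r_neq0 c_gt0)) ltr_pM2l ?invr_gt0 //.
rewrite (le_lt_trans (ler_norm _)) // -ltr_pdivrMr //.
rewrite /c (bigD1 i) //= addrCA ltrDl ltr_wpDr // sumr_ge0 // => j /andP[Pj _].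
exact: terms_ge0.
Qed.

Lemma exists_dominated_scaling (R : realFieldType) n (x u : 'cV[R]_n) :
  (forall j, x j ord0 = 0 -> u j ord0 = 0) ->
  exists2 e : R, 0 < e & forall t, 0 <= t <= e -> dominated_by x (t *: u).
Proof.
move=> u_supp.
have [e e_gt0 e_small] : exists2 e : R, 0 < e &
    forall j, x j ord0 != 0 -> e * `|u j ord0| < `|x j ord0|.
  by apply: exists_small_pos_factor => j; rewrite normr_gt0.
exists e => // t /andP[t_ge0 t_le_e] j; rewrite mxE.
have [xj0 | xj_neq0] := eqVneq (x j ord0) 0; first by left; rewrite u_supp // mulr0.
right; rewrite normrM ger0_norm // (le_lt_trans _ (e_small j xj_neq0)) //.
by rewrite ler_wpM2r.
Qed.

Lemma diagv_signv_mulmx_neq0 (R : realDomainType) n (x u : 'cV[R]_n) :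
  u != 0 -> (forall j, x j ord0 = 0 -> u j ord0 = 0) -> diagv (signv x) *m u != 0.
Proof.
move=> /cV0Pn[j uj_neq0] u_supp; apply/cV0Pn; exists j.
rewrite diagv_mulmxE mxE signrE mulf_neq0 // sgr_eq0.
by apply: contra uj_neq0 => /eqP/u_supp ->.
Qed.

Lemma infinite_set_inj_nat T (S : set T) (f : nat -> T) :
  injective f -> (forall k, S (f k)) -> infinite_set S.
Proof.
move=> f_inj Sf S_fin; apply: infinite_nat.
have preim_fin : finite_set (f @^-1` S).
  by apply: finite_preimage S_fin => k1 k2 _ _ /f_inj.
by apply: sub_finite_set preim_fin => k _; apply: Sf.
Qed.

Theorem theorem3p4 (R : realFieldType) (m n : nat) (A B : 'M[R]_(m, n))
  (b : 'cV[R]_m) (xs : 'cV[R]_n) :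
  (m < n)%N ->
  A *m xs - B *m absv xs = b ->
  (\rank (A *m diagv (signv xs) - B)%R < nnz xs)%N ->
  infinite_set (sol_sign A B b (signv xs)).
Proof.
move=> _ xs_sol rk_lt.
have [u ker_u [u_neq0 u_supp]] := supported_kernel_vector rk_lt.
have u_supp' j : xs j ord0 = 0 -> u j ord0 = 0.
  by move=> xj0; apply: u_supp; rewrite inE xj0 eqxx.
have [e e_gt0 e_dom] := exists_dominated_scaling u_supp'.
pose t k : R := e / k.+1%:R.
have t_range k : 0 <= t k <= e.
  by rewrite /t divr_ge0 ?(ltW e_gt0) //= ler_pdivrMr // ler_peMr ?(ltW e_gt0) // ler1n.
have t_inj : injective t.
  move=> k1 k2 /(mulfI (lt0r_neq0 e_gt0)) /invr_inj /eqP.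
  by rewrite eqr_nat eqSS => /eqP.
have Du_neq0 := diagv_signv_mulmx_neq0 u_neq0 u_supp'.
apply: (@infinite_set_inj_nat _ _ (fun k => xs + diagv (signv xs) *m (t k *: u))).
- move=> k1 k2 /addrI/eqP; rewrite -!scalemxAr -subr_eq0 -scalerBl scaler_eq0.
  by rewrite (negbTE Du_neq0) orbF subr_eq0 => /eqP/t_inj.
- move=> k; apply: sol_sign_addr_diag => //; last exact: e_dom.
  by rewrite -scalemxAr ker_u scaler0.
Qed.
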